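(* Let $\mathcal C\subseteq 2^{[n]}$ be an inductively pierced code, suppose the largest clique in $G(\mathcal C)$ has size $k+1$, and suppose $\mathcal C$ has a well-formed realization by open balls in $\mathbb R^k$. Then $\mathcal C$ is splittable.
   Context: A code is a set $\mathcal C\subseteq 2^{[n]}$, $[n]=\{1,\dots,n\}$. Standing conventions: $\emptyset\in\mathcal C$; every neuron lies in some codeword; no two distinct neurons lie in exactly the same codewords. $\mathcal C\setminus i$ is obtained by removing $i$ from every codeword. For $\alpha\subseteq\beta$, $[\alpha,\beta]=\{\gamma:\alpha\subseteq\gamma\subseteq\beta\}$, of rank $|\beta\setminus\alpha|$. A neuron $i$ is a $k$-piercing of $\mathcal C$ if there are $\sigma\subseteq\tau\subseteq[n]\setminus\{i\}$ with $[\sigma,\tau]$ of rank $k$, $[\sigma,\tau]\subseteq\mathcal C\setminus i$, and $\mathcal C=(\mathcal C\setminus i)\cup[\sigma\cup\{i\},\tau\cup\{i\}]$. A code is $k$-inductively pierced if $\mathcal C=\{\emptyset\}$, or some neuron $i$ is a $k'$-piercing for some $k'\le k$ and $\mathcal C\setminus i$ is $k$-inductively pierced; inductively pierced means $k$-inductively pierced for some $k$. A pseudo-monomial is $\prod_{a\in\alpha}x_a\prod_{b\in\beta}(1-x_b)\in\mathbb F_2[x_1,\dots,x_n]$ with $\alpha\cap\beta=\emptyset$, ordered by divisibility; $J_\mathcal C=\langle\rho_\gamma:\gamma\notin\mathcal C\rangle$ with $\rho_\gamma=\prod_{a\in\gamma}x_a\prod_{b\notin\gamma}(1-x_b)$,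 and $\mathrm{CF}(J_\mathcal C)$ is its set of minimal pseudo-monomials (for inductively pierced codes all have degree two). $G(\mathcal C)$ is the graph on $[n]$ with edge $ab$ whenever $\mathrm{CF}(J_\mathcal C)$ contains no pseudo-monomial in the variables $x_a,x_b$; $P(\mathcal C)$ is the partial order with $a<b$ iff $x_a(1-x_b)\in\mathrm{CF}(J_\mathcal C)$. If the largest clique of $G(\mathcal C)$ has size $k+1$, the attaching set of a $k$-element clique $\sigma$ is the set of $i\notin\sigma$ adjacent to all of $\sigma$; $\mathcal C$ is splittable if for each such $\sigma$ the attaching set can be partitioned as $A\sqcup B$ such that $P(\mathcal C)$ restricted to the attaching set is a total order on $A$, a total order on $B$, with no element of $A$ comparable to an element of $B$. Sets $U_1,\dots,U_n\subseteq\mathbb R^d$ realize $\mathcal C$ if $\mathcal C=\{\gamma:\bigcap_{i\in\gamma}U_i\setminus\bigcup_{j\notin\gamma}U_j\ne\emptyset\}$. A collection of $(d-1)$-spheres in $\mathbb R^d$ is well-formed if for every $m\le d$ the intersection of any $m$ of them is empty or a $(d-m)$-dimensional sphere, and the intersection of any $d+1$ of them is empty; open balls are well-formed if their boundary spheres are. *)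

From HB Require Import structures.
From mathcomp Require Import all_boot all_order all_algebra.
From mathcomp Require Import Rstruct.
From mathcomp Require Import mpoly.
From Stdlib Require Import Rdefinitions.
Set Implicit Arguments. Unset Strict Implicit. Unset Printing Implicit Defensive.
Import Order.TTheory GRing.Theory Num.Theory.

Local Open Scope ring_scope.

Section Codes.
Variable n : nat.

Definition code := {set {set 'I_n}}.

Definition code_conventions (C : code) : Prop :=
  [/\ set0 \in C,
      (forall i : 'I_n, exists2 c, c \in C & i \in c) &
      (forall i j : 'I_n, (forall c, c \in C -> (i \in c) = (j \in c)) -> i = j)].

(** C \ i : remove i from every codeword (i then simply never fires). *)
Definition delete (C : code) (i : 'I_n) : code := [set c :\ i | c in C].

Definition interval (a b : {set 'I_n}) : code := [set g : {set 'I_n} | (a \subset g) && (g \subset b)].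

Definition piercing (C : code) (i : 'I_n) (k : nat) : Prop :=
  exists sigma tau : {set 'I_n},
    [/\ sigma \subset tau, i \notin tau, #|tau :\: sigma|%N = k,
        interval sigma tau \subset delete C i &
        C = delete C i :|: interval (i |: sigma) (i |: tau)].

Inductive k_ind_pierced (k : nat) : code -> Prop :=
| kip_base : k_ind_pierced k [set set0]
| kip_step (C : code) (i : 'I_n) (k' : nat) :
    leq k' k -> piercing C i k' -> k_ind_pierced k (delete C i) ->
    k_ind_pierced k C.

Definition ind_pierced (C : code) : Prop := exists k, k_ind_pierced k C.

Definition poly := {mpoly 'F_2[n]}.

Definition pmono (a b : {set 'I_n}) : poly :=
  (\prod_(i in a) 'X_i) * \prod_(j in b) (1 - 'X_j).

Definition is_pseudo_monomial (f : poly) : Prop :=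
  exists a b : {set 'I_n}, [disjoint a & b] /\ f = pmono a b.

Definition rho (g : {set 'I_n}) : poly := pmono g (~: g).

Definition in_neural_ideal (C : code) (f : poly) : Prop :=
  exists h : {set 'I_n} -> poly, f = \sum_(g in ~: C) h g * rho g.

Definition mdivides (f g : poly) : Prop := exists h : poly, g = f * h.

Definition in_CF (C : code) (f : poly) : Prop :=
  [/\ is_pseudo_monomial f, in_neural_ideal C f &
      forall g, is_pseudo_monomial g -> in_neural_ideal C g ->
                mdivides g f -> mdivides f g].

Definition Gedge (C : code) (a b : 'I_n) : Prop :=
  a != b /\
  ~ (exists a' b' : {set 'I_n},
        [disjoint a' & b'] /\ (a' :|: b' \subset [set a; b]) /\ in_CF C (pmono a' b')).

Definition clique (C : code) (s : {set 'I_n}) : Prop :=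
  forall a b, a \in s -> b \in s -> a != b -> Gedge C a b.

Definition max_clique_size (C : code) (m : nat) : Prop :=
  (exists2 s, clique C s & #|s| = m) /\ (forall s, clique C s -> leq #|s| m).

Definition Plt (C : code) (a b : 'I_n) : Prop :=
  a != b /\ in_CF C (pmono [set a] [set b]).

Definition Pcomparable (C : code) (a b : 'I_n) : Prop := Plt C a b \/ Plt C b a.

Definition attaching_set (C : code) (s : {set 'I_n}) (i : 'I_n) : Prop :=
  i \notin s /\ forall j, j \in s -> Gedge C i j.

(** splittable, for a code whose largest clique has size k+1 *)
Definition splittable (k : nat) (C : code) : Prop :=
  forall s : {set 'I_n}, clique C s -> #|s| = k ->
    exists A B : {set 'I_n},
      [/\ (forall i, attaching_set C s i <-> i \in A :|: B),
          [disjoint A & B],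
          (forall a a', a \in A -> a' \in A -> a != a' -> Pcomparable C a a'),
          (forall b b', b \in B -> b' \in B -> b != b' -> Pcomparable C b b') &
          (forall a b, a \in A -> b \in B -> ~ Pcomparable C a b)].

End Codes.

Section Geometry.
Variable d : nat.
Local Notation pt := 'rV[R]_d.

Definition sqdist (x y : pt) : R := \sum_(j < d) (x 0 j - y 0 j) ^+ 2.

Definition open_ball (c : pt) (r : R) : pt -> Prop := fun x => sqdist x c < r ^+ 2.

Definition sphere (c : pt) (r : R) : pt -> Prop := fun x => sqdist x c = r ^+ 2.

(** an m-dimensional sphere in R^d: the points at distance r > 0 from c
    lying in the (m+1)-dimensional affine subspace c + rowspace V *)
Definition is_dim_sphere (m : nat) (S : pt -> Prop) : Prop :=
  exists (c : pt) (r : R) (V : 'M[R]_(m.+1, d)),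
    [/\ 0 < r, \rank V = m.+1 &
        forall x, S x <-> ((x - c <= V)%MS /\ sqdist x c = r ^+ 2)].

Definition well_formed_balls (n : nat) (c : 'I_n -> pt) (r : 'I_n -> R) : Prop :=
  (forall T : {set 'I_n}, leq 1 #|T| && leq #|T| d ->
     (forall x, ~ (forall i, i \in T -> sphere (c i) (r i) x)) \/
     is_dim_sphere (subn d #|T|) (fun x => forall i, i \in T -> sphere (c i) (r i) x)) /\
  (forall T : {set 'I_n}, #|T| = d.+1 ->
     forall x, ~ (forall i, i \in T -> sphere (c i) (r i) x)).

Definition realizes (n : nat) (U : 'I_n -> pt -> Prop) (C : code n) : Prop :=
  forall g : {set 'I_n}, g \in C <->
    exists x, (forall i, i \in g -> U i x) /\ (forall j, j \notin g -> ~ U j x).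

Definition has_wf_ball_realization (n : nat) (C : code n) : Prop :=
  exists (c : 'I_n -> pt) (r : 'I_n -> R),
    (forall i, 0 < r i) /\ well_formed_balls c r /\
    realizes (fun i => open_ball (c i) (r i)) C.

End Geometry.

From Pilot Require Import Defs.
From HB Require Import structures.
From mathcomp Require Import all_boot all_order all_algebra.
From mathcomp Require Import Rstruct mpoly ring lra boolp.
From Stdlib Require Import Rdefinitions.
Set Implicit Arguments. Unset Strict Implicit. Unset Printing Implicit Defensive.
Import Order.TTheory GRing.Theory Num.Theory.
Local Open Scope ring_scope.

(* Inductive piercing makes every clique of G(C) a Venn diagram inside the code:
   each of its subsets is the trace of a codeword.  Let s be a k-clique and b an
   attaching neuron.  The k+1 balls of b |: s then form a Venn diagram in R^k
   whose spheres have no common point, and comparing powers of points shows that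
   the centers of b |: s are affinely independent and that their radical center
   lies inside the balls.  Hence the radical line of s, which carries all these
   radical centers, meets the spheres of s in two points p and q, and every
   attaching ball contains exactly one of them.  Attaching neurons are pairwise
   non-adjacent by maximality of the cliques, so those whose balls contain p
   share the codeword of p and are totally ordered by P(C), likewise for q, and
   the codewords of p and q forbid any comparability across the two groups. *)

Lemma disjointP (T : finType) (A B : {set T}) :
  reflect (forall x, x \in A -> x \in B -> False) [disjoint A & B].
Proof.
rewrite -setI_eq0; apply: (iffP eqP) => [AB x xA xB | AB].
  by have := in_set0 x; rewrite -AB inE xA xB.
by apply/setP => x; rewrite !inE; apply/negP => /andP[]; apply: AB.
Qed.

(** * Pseudo-monomials of the neural ideal *)

Section NeuralIdeal.
Variables (n : nat) (C : code n).
Implicit Types (a b c g : {set 'I_n}).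

(* Pseudo-monomials in J_C are recognized by evaluating at the characteristic
   vectors of codewords. *)
Definition charvec c (j : 'I_n) : 'F_2 := (j \in c)%:R.

Lemma meval_prodX a c : (\prod_(i in a) 'X_i : Defs.poly n).@[charvec c] = (a \subset c)%:R.
Proof.
rewrite rmorph_prod /=; under eq_bigr do rewrite mevalXU.
have [ac | /subsetPn[i ia ic]] := boolP (a \subset c).
  by apply: big1 => i ia; rewrite /charvec (subsetP ac i ia).
by rewrite (bigD1 i) //= /charvec (negbTE ic) mul0r.
Qed.

Lemma meval_prod1BX b c :
  (\prod_(j in b) (1 - 'X_j) : Defs.poly n).@[charvec c] = [disjoint b & c]%:R.
Proof.
rewrite rmorph_prod /=; under eq_bigr do rewrite mevalB meval1 mevalXU.
have [bc | ] := boolP [disjoint b & c].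
  by apply: big1 => i ib; rewrite /charvec (disjointFr bc ib) subr0.
rewrite -setI_eq0 => /set0Pn[i]; rewrite inE => /andP[ib ic].
by rewrite (bigD1 i) //= /charvec ic subrr mul0r.
Qed.

Lemma meval_pmono a b c :
  (pmono a b).@[charvec c] = ((a \subset c) && [disjoint b & c])%:R.
Proof.
rewrite rmorphM /= meval_prodX meval_prod1BX.
by case: (a \subset c); case: [disjoint b & c]; rewrite ?mul1r ?mul0r.
Qed.

Lemma meval_rho g c : (rho g).@[charvec c] = (g == c)%:R.
Proof. by rewrite meval_pmono disjoints_subset setCS eqEsubset. Qed.

Lemma meval_neural_ideal (f : Defs.poly n) c :
  in_neural_ideal C f -> c \in C -> f.@[charvec c] = 0.
Proof.
case=> h -> cC; rewrite rmorph_sum /=; apply: big1 => g; rewrite inE => gC.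
rewrite rmorphM /= meval_rho; case: eqP gC => [-> | _]; first by rewrite cC.
by rewrite mulr0.
Qed.

(* The receptive-field relationship U_a \subset \bigcup_(j in b) U_j, read off the code. *)
Definition rf_relation a b := forall c, c \in C -> ~~ ((a \subset c) && [disjoint b & c]).

Lemma rf_relationS a b a' b' :
  a \subset a' -> b \subset b' -> rf_relation a b -> rf_relation a' b'.
Proof.
move=> aa' bb' rf c cC; apply: contra (rf c cC) => /andP[a'c b'c].
by rewrite (subset_trans aa' a'c) (disjointWl bb' b'c).
Qed.

Lemma pmono_prod a b : pmono a b =
  \prod_i ((if i \in a then 'X_i else 1) * (if i \in b then 1 - 'X_i else 1)).
Proof. by rewrite /pmono big_split /= -!big_mkcond. Qed.

Lemma rho_prod g : rho g = \prod_i (if i \in g then 'X_i else 1 - 'X_i : Defs.poly n).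
Proof.
rewrite /rho pmono_prod; apply: eq_bigr => i _; rewrite inE.
by case: (i \in g); rewrite ?mulr1 ?mul1r.
Qed.

(* Expanding each factor 1 = X_i + (1 - X_i) for i outside a :|: b. *)
Lemma pmono_sum_rho a b : [disjoint a & b] ->
  pmono a b = \sum_(g : {set 'I_n} | (a \subset g) && [disjoint b & g]) rho g.
Proof.
move=> ab.
pose allowed i (x : bool) := if i \in a then x else if i \in b then ~~ x else true.
pose lit i (x : bool) : Defs.poly n := if x then 'X_i else 1 - 'X_i.
have -> : pmono a b = \prod_i \sum_(x | allowed i x) lit i x.
  rewrite pmono_prod; apply: eq_bigr => i _; rewrite big_mkcond big_bool /= /allowed /lit.
  case ia: (i \in a); case ib: (i \in b) => /=.
  - by rewrite (disjointFr ab ia) in ib.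
  - by rewrite mulr1 addr0.
  - by rewrite mul1r add0r.
  - by rewrite mulr1 addrC subrK.
rewrite bigA_distr_big_dep /=.
rewrite (reindex (fun g : {set 'I_n} => [ffun i => i \in g])); last first.
  exists (fun f : {ffun 'I_n -> bool} => [set i | f i]) => g _.
    by apply/setP => i; rewrite inE ffunE.
  by apply/ffunP => i; rewrite ffunE inE.
apply: eq_big => [g | g _]; last first.
  by rewrite rho_prod; apply: eq_bigr => i _; rewrite ffunE.
apply/familyP/andP => [allowed_g | [ag bg] i]; last first.
  rewrite ffunE /allowed unfold_in /=.
  case ia: (i \in a); first by rewrite (subsetP ag i ia).
  by case ib: (i \in b) => //; rewrite (disjointFr bg ib).
split.
  by apply/subsetP => i ia; have := allowed_g i; rewrite ffunE /allowed unfold_in /= ia.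
apply/disjointP => i ib ig; have := allowed_g i.
by rewrite ffunE /allowed unfold_in /= ib ig (disjointFl ab ib).
Qed.

Lemma rf_relation_of_neural_ideal a b : in_neural_ideal C (pmono a b) -> rf_relation a b.
Proof.
move=> J c cC; apply/negP => abc; have := meval_neural_ideal J cC.
by rewrite meval_pmono abc => /eqP; rewrite oner_eq0.
Qed.

Lemma neural_ideal_of_rf_relation a b : [disjoint a & b] ->
  rf_relation a b -> in_neural_ideal C (pmono a b).
Proof.
move=> ab rf; exists (fun g => ((a \subset g) && [disjoint b & g])%:R).
rewrite pmono_sum_rho // [RHS]big_mkcond [LHS]big_mkcond /=.
apply: eq_bigr => g _; rewrite inE.
case: (boolP ((a \subset g) && [disjoint b & g])) => [abg | _].
  by case gC: (g \in C); [have := rf g gC; rewrite abg | rewrite mul1r].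
by case: (g \notin C); rewrite ?mul0r.
Qed.

Lemma in_CF_rf_relation a b : in_CF C (pmono a b) -> rf_relation a b.
Proof. by case=> _ /rf_relation_of_neural_ideal. Qed.

Lemma mdivides_pmono a b a' b' : [disjoint a' & b'] ->
  mdivides (pmono a b) (pmono a' b') -> a \subset a' /\ b \subset b'.
Proof.
move=> a'b' [h E].
have sub c : (a' \subset c) && [disjoint b' & c] -> (a \subset c) && [disjoint b & c].
  move=> a'b'c; apply/negPn/negP => abc.
  have := congr1 (meval (charvec c)) E; rewrite meval_pmono mevalM meval_pmono.
  by rewrite a'b'c (negbTE abc) mul0r => /eqP; rewrite oner_eq0.
split; first by have := sub a'; rewrite subxx disjoint_sym a'b' => /(_ isT) /andP[].
apply/subsetP => j jb; apply/negPn/negP => jb'.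
have ja' : (a' \subset j |: a') && [disjoint b' & j |: a'].
  rewrite subsetU1; apply/disjointP => x xb'; rewrite !inE => /orP[/eqP xj | xa'].
    by move: xb'; rewrite xj (negbTE jb').
  by rewrite (disjointFr a'b' xa') in xb'.
by have /andP[_ /disjointP/(_ j jb)] := sub _ ja'; rewrite setU11; apply.
Qed.

Lemma pmono_split a b a' b' : a' \subset a -> b' \subset b ->
  pmono a b = pmono a' b' * pmono (a :\: a') (b :\: b').
Proof.
move=> a'a b'b; rewrite /pmono [\prod_(i in a) _](big_setID a') [\prod_(i in b) _](big_setID b') /=.
by rewrite (setIidPr a'a) (setIidPr b'b) mulrACA.
Qed.

Lemma in_CF_pmonoP a b : [disjoint a & b] ->
  in_CF C (pmono a b) <->
  rf_relation a b /\ (forall a' b', a' \subset a -> b' \subset b ->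
                       rf_relation a' b' -> a' = a /\ b' = b).
Proof.
move=> ab; split=> [[_ J minJ] | [rf min_rf]].
  split=> [|a' b' a'a b'b rf']; first exact: rf_relation_of_neural_ideal.
  have a'b' : [disjoint a' & b'] by apply: disjointW ab.
  have [|||h E] := minJ (pmono a' b').
  - by exists a', b'.
  - exact: neural_ideal_of_rf_relation.
  - by exists (pmono (a :\: a') (b :\: b')); apply: pmono_split.
  have [aa' bb'] := mdivides_pmono a'b' (ex_intro _ h E).
  by split; apply/eqP; rewrite eqEsubset ?a'a ?b'b ?aa' ?bb'.
split; [by exists a, b | exact: neural_ideal_of_rf_relation |].
move=> _ [a' [b' [a'b' ->]]] J /(mdivides_pmono ab)[a'a b'b].
have [-> ->] := min_rf a' b' a'a b'b (rf_relation_of_neural_ideal J).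
by exists 1; rewrite mulr1.
Qed.

(* Since rf_relation is monotone, minimality only has to be checked against
   the pairs obtained by dropping a single variable. *)
Lemma in_CF_pmono_of_witnesses a b : [disjoint a & b] -> rf_relation a b ->
  (forall x, x \in a :|: b ->
     exists2 c, c \in C & (a :\ x \subset c) && [disjoint b :\ x & c]) ->
  in_CF C (pmono a b).
Proof.
move=> ab rf witness; apply/(in_CF_pmonoP ab); split=> // a' b' a'a b'b rf'.
have kept x : x \in a :|: b -> x \in a' :|: b'.
  move=> xab; apply/negPn/negP; rewrite inE negb_or => /andP[xa' xb'].
  have [c cC abc] := witness x xab.
  suff rfx : rf_relation (a :\ x) (b :\ x) by have := rfx c cC; rewrite abc.
  by apply: rf_relationS rf'; rewrite subsetD1 ?a'a ?b'b.
split; apply/eqP; rewrite eqEsubset ?a'a ?b'b //; apply/subsetP => x.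
  move=> xa; have := kept x; rewrite !inE xa => /(_ isT) /orP[// | xb'].
  by have := subsetP b'b x xb'; rewrite (disjointFr ab xa).
move=> xb; have := kept x; rewrite !inE xb orbT => /(_ isT) /orP[xa' | //].
by have := subsetP a'a x xa'; rewrite (disjointFl ab xb).
Qed.
End NeuralIdeal.

(** * Inductive piercing *)

Section Piercing.
Variable n : nat.
Implicit Types (C : code n) (a b c K S : {set 'I_n}) (i j : 'I_n).

Lemma Gedge_sym C i j : Gedge C i j -> Gedge C j i.
Proof.
case=> ij nonedge; split=> [|[a [b [ab [abij CFab]]]]]; first by rewrite eq_sym.
apply: nonedge; exists a, b; split=> //; split=> //; apply: subset_trans abij _.
by rewrite subUset !sub1set !inE !eqxx orbT.
Qed.

Lemma rf_relation_delete C i a b : i \notin a -> i \notin b ->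
  rf_relation (delete C i) a b <-> rf_relation C a b.
Proof.
move=> ia ib.
have sepD1 c : (a \subset c :\ i) && [disjoint b & c :\ i] = (a \subset c) && [disjoint b & c].
  rewrite subsetD1 ia andbT; congr andb.
  apply/disjointP/disjointP => bc x xb xc; apply: (bc x xb); last first.
    by move: xc; rewrite in_setD1 => /andP[].
  by rewrite in_setD1 xc andbT; apply: contraNneq ib => <-.
split=> rf c cC; last by case/imsetP: cC => c' c'C ->; rewrite sepD1 rf.
by rewrite -sepD1 rf //; apply: imset_f.
Qed.

Lemma in_CF_delete C i a b : i \notin a -> i \notin b -> [disjoint a & b] ->
  in_CF (delete C i) (pmono a b) <-> in_CF C (pmono a b).
Proof.
move=> ia ib ab; rewrite !in_CF_pmonoP // rf_relation_delete //.
have notin_sub S K : S \subset K -> i \notin K -> i \notin S.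
  by move=> SK; apply: contra; apply: (subsetP SK).
split=> -[rf min_rf]; split=> // a' b' a'a b'b rf'; apply: min_rf => //.
  by rewrite rf_relation_delete // ?(notin_sub _ _ a'a) ?(notin_sub _ _ b'b).
by move: rf'; rewrite rf_relation_delete // ?(notin_sub _ _ a'a) ?(notin_sub _ _ b'b).
Qed.

Lemma Gedge_delete C i x y : x != i -> y != i -> Gedge C x y -> Gedge (delete C i) x y.
Proof.
move=> xi yi [xy nonedge]; split=> // -[a [b [ab [abxy CFab]]]]; apply: nonedge.
have i_ab : i \notin a :|: b.
  by apply/negP => /(subsetP abxy); rewrite !inE !(eq_sym i) (negbTE xi) (negbTE yi).
move: i_ab; rewrite inE negb_or => /andP[ia ib].
by exists a, b; split=> //; split=> //; apply/(in_CF_delete _ ia ib ab).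
Qed.

Definition shatters C K := forall S, S \subset K -> exists2 c, c \in C & c :&: K = S.

Section PiercingStep.
Variables (C : code n) (i : 'I_n) (sigma tau : {set 'I_n}).
Hypotheses (sigma_tau : sigma \subset tau) (i_tau : i \notin tau)
  (interval_sub : Defs.interval sigma tau \subset delete C i)
  (C_eq : C = delete C i :|: Defs.interval (i |: sigma) (i |: tau))
  (C0 : set0 \in C).

Lemma delete_sub_pierced : delete C i \subset C.
Proof. by apply/subsetP => c cD; rewrite C_eq inE cD. Qed.

Lemma pierced_codeword c : c \in C -> i \in c -> sigma \subset c /\ c \subset i |: tau.
Proof.
rewrite C_eq !inE => /orP[/imsetP[c' _ ->] | /andP[isc cit]]; first by rewrite !inE eqxx.
by split=> //; apply: subset_trans isc; apply: subsetU1.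
Qed.

(* Otherwise x_i x_j would be a minimal pseudo-monomial of J_C. *)
Lemma pierced_neighbor_in_tau j : Gedge C i j ->
  (exists2 c, c \in C & i \in c) -> (exists2 c, c \in C & j \in c) -> j \in tau.
Proof.
move=> [ij nonedge] [ci ciC ici] [cj cjC jcj]; apply/negPn/negP => jtau.
have ij0 : [disjoint [set i; j] & set0] by rewrite -setI_eq0 setI0.
apply: nonedge; exists [set i; j], set0; rewrite setU0; split=> //; split=> //.
apply: in_CF_pmono_of_witnesses => // [c cC | x].
  apply/negP => /andP[/subsetP ijc _].
  have [_ /subsetP/(_ j (ijc j (set22 i j)))] := pierced_codeword cC (ijc i (set21 i j)).
  by rewrite !inE (negbTE jtau) orbF eq_sym (negbTE ij).
rewrite setU0 !inE => /orP[] /eqP ->; [exists cj | exists ci] => //;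
  rewrite set0D -setI_eq0 set0I eqxx andbT.
  by rewrite setU1K ?sub1set // inE.
by rewrite setUC setU1K ?sub1set // inE eq_sym.
Qed.

(* Otherwise x_i (1 - x_j) would be a minimal pseudo-monomial of J_C. *)
Lemma pierced_neighbor_notin_sigma j : Gedge C i j ->
  (exists2 c, c \in C & i \in c) -> j \notin sigma.
Proof.
move=> [ij nonedge] [ci ciC ici]; apply/negP => jsigma.
have ij1 : [disjoint [set i] & [set j]] by rewrite disjoints1 inE.
apply: nonedge; exists [set i], [set j]; split=> //; split=> //.
apply: in_CF_pmono_of_witnesses => // [c cC | x].
  rewrite sub1set disjoints1 negb_and negbK -implybE; apply/implyP => ic.
  by have [/subsetP/(_ j jsigma)] := pierced_codeword cC ic.
rewrite !inE => /orP[] /eqP ->.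
  by exists set0; rewrite // setDv sub0set -setI_eq0 setI0 eqxx.
exists ci; rewrite // setDv -setI_eq0 set0I eqxx andbT.
by rewrite (subset_trans (subD1set _ _)) // sub1set.
Qed.

(* The neighbours of i lie in tau :\: sigma, so sigma :|: S is a codeword
   whose trace on K is S. *)
Lemma pierced_shatters_clique K : clique C K -> i \in K ->
  (forall j, j \in K -> exists2 c, c \in C & j \in c) -> shatters C K.
Proof.
move=> cK iK fire.
have window j : j \in K -> j != i -> j \in tau :\: sigma.
  move=> jK ji; have ij : Gedge C i j by apply: cK; rewrite // eq_sym.
  rewrite inE (pierced_neighbor_notin_sigma ij (fire i iK)) /=.
  exact: pierced_neighbor_in_tau ij (fire i iK) (fire j jK).
have sigmaK : [disjoint sigma & K].
  apply/disjointP => j js jK; case: (eqVneq j i) => [ji | ji].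
    by move: (subsetP sigma_tau j js); rewrite ji (negbTE i_tau).
  by have := window j jK ji; rewrite inE js.
move=> S SK; exists (sigma :|: S); last first.
  by rewrite setIUl (disjoint_setI0 sigmaK) set0U (setIidPl SK).
have S_tau j : j \in S -> j != i -> j \in tau.
  by move=> jS ji; have := window j (subsetP SK j jS) ji; rewrite inE => /andP[].
rewrite C_eq !inE; case iS: (i \in S); apply/orP; [right | left].
  rewrite subUset sub1set !inE iS orbT subsetUl subUset.
  rewrite (subset_trans sigma_tau (subsetU1 _ _)) /=.
  by apply/subsetP => j jS; rewrite !inE; case: eqVneq => //= ji; apply: S_tau.
apply: (subsetP interval_sub); rewrite inE subsetUl subUset sigma_tau.
by apply/subsetP => j jS; apply: S_tau => //; apply: contraFneq iS => <-.
Qed.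
End PiercingStep.

Lemma k_ind_pierced_set0 k C : k_ind_pierced k C -> set0 \in C.
Proof.
elim=> [|C' i k' _ [sigma [tau [_ _ _ _ E]]] _ IH]; first by rewrite inE.
by rewrite E inE IH.
Qed.

Lemma k_ind_pierced_shatters_clique k C K : k_ind_pierced k C -> clique C K ->
  (forall j, j \in K -> exists2 c, c \in C & j \in c) -> shatters C K.
Proof.
move=> kC; elim: kC K => [|C' i k' _ [sigma [tau [st it _ sub E]]] kD IH] K cK fire.
  have -> : K = set0.
    apply/setP => j; rewrite inE; apply/negP => /fire[c].
    by rewrite inE => /eqP ->; rewrite inE.
  by move=> S; rewrite subset0 => /eqP ->; exists set0; rewrite ?inE ?set0I.
have C0 : set0 \in C' by rewrite E inE (k_ind_pierced_set0 kD).
have [iK | iK] := boolP (i \in K); first exact: (pierced_shatters_clique st it sub E C0).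
move=> S SK; have [||c cD cKS] := IH K _ _ S SK.
- move=> x y xK yK xy; apply: Gedge_delete; last exact: cK.
    by apply: contraNneq iK => <-.
  by apply: contraNneq iK => <-.
- move=> j jK; have [c cC jc] := fire j jK; exists (c :\ i); first exact: imset_f.
  by rewrite in_setD1 jc andbT; apply: contraNneq iK => <-.
- by exists c => //; apply: (subsetP (delete_sub_pierced E)).
Qed.
End Piercing.

(** * Linear algebra in R^k *)

Section Dot.
Variable k : nat.
Implicit Types (u v w x y : 'rV[R]_k).

Definition dot u v := \sum_j u 0 j * v 0 j.

Lemma dotC u v : dot u v = dot v u.
Proof. by apply: eq_bigr => j _; rewrite mulrC. Qed.

Lemma dotDl u v w : dot (u + v) w = dot u w + dot v w.
Proof. by rewrite /dot -big_split; apply: eq_bigr => j _; rewrite mxE mulrDl. Qed.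

Lemma dotZl a u v : dot (a *: u) v = a * dot u v.
Proof. by rewrite /dot mulr_sumr; apply: eq_bigr => j _; rewrite mxE mulrA. Qed.

Lemma dotNl u v : dot (- u) v = - dot u v.
Proof. by rewrite -scaleN1r dotZl mulN1r. Qed.

Lemma dotBl u v w : dot (u - v) w = dot u w - dot v w.
Proof. by rewrite dotDl dotNl. Qed.

Lemma dotDr u v w : dot w (u + v) = dot w u + dot w v.
Proof. by rewrite dotC dotDl !(dotC w). Qed.

Lemma dotZr a u v : dot v (a *: u) = a * dot v u.
Proof. by rewrite dotC dotZl dotC. Qed.

Lemma dotBr u v w : dot w (u - v) = dot w u - dot w v.
Proof. by rewrite !(dotC w) dotBl. Qed.

Lemma dot0r u : dot u 0 = 0.
Proof. by rewrite /dot big1 // => j _; rewrite mxE mulr0. Qed.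

Lemma dot_sumZl (I : finType) (P : pred I) (l : I -> R) (g : I -> 'rV[R]_k) x :
  dot (\sum_(j | P j) l j *: g j) x = \sum_(j | P j) l j * dot (g j) x.
Proof.
elim/big_rec2: _ => [|j s t _ <-]; last by rewrite dotDl dotZl.
by rewrite dotC dot0r.
Qed.

Lemma dot_ge0 u : 0 <= dot u u.
Proof. by apply: sumr_ge0 => j _; rewrite -expr2 sqr_ge0. Qed.

Lemma dot_gt0 u : u != 0 -> 0 < dot u u.
Proof.
apply: contraNT; rewrite -leNgt => u0; apply/eqP/matrixP => i j; rewrite ord1 mxE.
have /psumr_eq0P uj : dot u u = 0 by apply/eqP; rewrite eq_le u0 dot_ge0.
apply/eqP; rewrite -sqrf_eq0 expr2 uj // => l _.
by rewrite -expr2 sqr_ge0.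
Qed.

Lemma sqdist_dot x y : sqdist x y = dot (x - y) (x - y).
Proof. by apply: eq_bigr => j _; rewrite !mxE expr2. Qed.

End Dot.

Section RowsMatrix.
Variables (k n : nat).
Implicit Types (K : {set 'I_n}) (g : 'I_n -> 'rV[R]_k).

Definition rowsmx K g : 'M[R]_(#|K|, k) := \matrix_(i < #|K|) g (enum_val i).

Lemma mul_rowsmx_tr K g x i : (x *m (rowsmx K g)^T) 0 i = dot (g (enum_val i)) x.
Proof. by rewrite dotC !mxE; apply: eq_bigr => l _; rewrite !mxE. Qed.

Lemma rowsmx_dependence K g : ~~ row_free (rowsmx K g) ->
  exists l : 'I_n -> R, (exists2 j, j \in K & l j != 0) /\ \sum_(j in K) l j *: g j = 0.
Proof.
move=> nfree; have [K0 | /card_gt0P[j0 j0K]] := posnP #|K|.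
  by move: nfree; rewrite /row_free eqn_leq rank_leq_row /=; move: (\rank _) => rk; rewrite K0.
move: nfree; rewrite -kermx_eq0 => /rowV0Pn[u /sub_kermxP uM u0].
exists (fun j => u 0 (enum_rank_in j0K j)); split.
  have [i ui] : exists i, u 0 i != 0.
    apply/existsP; apply: contraR u0 => /existsPn u0.
    by apply/eqP/rowP => i; rewrite mxE; apply/eqP; rewrite -[_ == _]negbK u0.
  by exists (enum_val i); [exact: enum_valP | rewrite enum_valK_in].
rewrite big_enum_val /= -[RHS]uM mulmx_sum_row.
by apply: eq_bigr => i _; rewrite enum_valK_in rowK.
Qed.

Lemma card_gt_dependence K g : (k < #|K|)%nat ->
  exists l : 'I_n -> R, (exists2 j, j \in K & l j != 0) /\ \sum_(j in K) l j *: g j = 0.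
Proof.
move=> kK; apply: rowsmx_dependence; apply/negP => /eqP rk.
by have := rank_leq_col (rowsmx K g); rewrite rk leqNgt kK.
Qed.

Lemma rowsmx_solve K g (b : 'I_n -> R) : row_free (rowsmx K g) ->
  exists x, forall j, j \in K -> dot (g j) x = b j.
Proof.
move=> free; have full : row_full (rowsmx K g)^T by rewrite /row_full mxrank_tr.
have /submxP[x xE] := submx_full (\row_i b (enum_val i)) full.
exists x => j jK; have := congr1 (fun v : 'rV_#|K| => v 0 (enum_rank_in jK j)) xE.
by rewrite /= mul_rowsmx_tr mxE enum_rankK_in.
Qed.

Lemma rowsmx_eq0 K g x : row_free (rowsmx K g) -> #|K| = k ->
  (forall j, j \in K -> dot (g j) x = 0) -> x = 0.
Proof.
move=> free Kk x0; have freeT : row_free (rowsmx K g)^T.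
  by rewrite /row_free mxrank_tr (eqP free) Kk.
apply/eqP; rewrite -(mulmx_free_eq0 _ freeT); apply/eqP/rowP => i.
by rewrite mul_rowsmx_tr x0 ?enum_valP // mxE.
Qed.

End RowsMatrix.

(** * Powers of points *)

Lemma lt0_mul_opposite (F : realDomainType) (a b : F) :
  a * b < 0 -> (a < 0) = ~~ (b < 0).
Proof. by rewrite mulr_lt0 => /and3P[_ _ /addbP <-]; rewrite negbK. Qed.

Lemma quadratic_factor (F : rcfType) (D B P : F) : 0 < D -> P < 0 ->
  exists lm lp, forall l, D * l ^+ 2 + 2 * B * l + P = D * (l - lm) * (l - lp).
Proof.
move=> Dpos Pneg; have D0 : D != 0 by rewrite gt_eqF.
have disc_pos : 0 < B ^+ 2 - D * P by have := sqr_ge0 B; nra.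
set sq := Num.sqrt (B ^+ 2 - D * P).
have sq2 : sq ^+ 2 = B ^+ 2 - D * P by rewrite sqr_sqrtr // ltW.
exists ((- B - sq) / D), ((- B + sq) / D).
have -> : P = (B ^+ 2 - sq ^+ 2) / D by rewrite sq2; field.
by move=> l; field.
Qed.

Section Power.
Variable k : nat.
Implicit Types (c x y z : 'rV[R]_k) (r : R).

Definition power c r x := sqdist x c - r ^+ 2.

Lemma open_ball_power c r x : open_ball c r x = (power c r x < 0).
Proof. by rewrite /open_ball /power subr_lt0. Qed.

Lemma sphere_power c r x : sphere c r x <-> power c r x = 0.
Proof.
rewrite /sphere /power; split=> [-> | /eqP]; first by rewrite subrr.
by rewrite subr_eq0 => /eqP.
Qed.

Lemma power_expand c r x : power c r x = dot x x - 2 * dot c x + power c r 0.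
Proof.
rewrite /power !sqdist_dot sub0r !(dotBl, dotBr, dotNl) !(dotC _ (- c)) dotNl (dotC c x).
ring.
Qed.

Lemma power_sub c r c' r' x :
  power c r x - power c' r' x = - 2 * dot (c - c') x + (power c r 0 - power c' r' 0).
Proof. by rewrite (power_expand c r x) (power_expand c' r' x) dotBl; ring. Qed.

Lemma power_shift c r x y : power c r (x + y) = dot y y + 2 * dot (x - c) y + power c r x.
Proof.
rewrite (power_expand c r (x + y)) (power_expand c r x) !(dotBl, dotDl, dotDr) (dotC y x).
ring.
Qed.

Lemma power_sub_radical c r c' r' x z : power c r x = power c' r' x ->
  power c r z - power c' r' z = - 2 * dot (c - c') (z - x).
Proof.
move=> eq_x; have := power_sub c r c' r' x; rewrite eq_x subrr.
by rewrite (power_sub c r c' r' z) dotBr => h; lra.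
Qed.

Lemma radical_dot_eq0 c r c' r' x z : power c r x = power c' r' x ->
  power c r z = power c' r' z -> dot (c - c') (z - x) = 0.
Proof. by move=> eq_x eq_z; have := power_sub_radical z eq_x; rewrite eq_z subrr; lra. Qed.

Definition venn_balls n (c : 'I_n -> 'rV[R]_k) (r : 'I_n -> R) (K : {set 'I_n}) :=
  forall S : {set 'I_n}, S \subset K ->
    exists x, forall j, j \in K -> (power (c j) (r j) x < 0) = (j \in S).

End Power.

Section PowerFamily.
Variables (k n : nat) (c : 'I_n -> 'rV[R]_k) (r : 'I_n -> R).
Local Notation pw j := (power (c j) (r j)).
Implicit Types (K S : {set 'I_n}) (l : 'I_n -> R).

Lemma venn_weighted_signs K l : venn_balls c r K ->
  exists x, forall j, j \in K -> l j * pw j x <= 0 /\ (0 < l j -> l j * pw j x < 0).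
Proof.
move=> V; have [|x xS] := V [set j in K | 0 < l j].
  by apply/subsetP => j; rewrite inE => /andP[].
exists x => j jK; have := xS j jK; rewrite inE jK /=.
case: (ltP 0 (l j)) => [lpos | lnpos] pj.
  have : pw j x < 0 by rewrite pj.
  by split=> [|_]; nra.
have : 0 <= pw j x by rewrite leNgt pj.
by split=> [|lpos]; nra.
Qed.

(* At a point inside exactly the balls of positive (resp. negative) weight the
   combination is negative (resp. nonnegative). *)
Lemma venn_combination_not_proportional K l (Q : 'rV[R]_k -> R) L :
  venn_balls c r K -> (exists2 j0, j0 \in K & l j0 != 0) -> (forall x, 0 < Q x) ->
  ~ (forall x, \sum_(j in K) l j * pw j x = L * Q x).
Proof.
move=> V [j0 j0K l0] Qpos.
suff pos_case l' L' : 0 < l' j0 -> ~ (forall x, \sum_(j in K) l' j * pw j x = L' * Q x).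
  have [lpos | lneg | /eqP] := ltrgt0P (l j0); [exact: pos_case | | by rewrite (negbTE l0)].
  move=> comb; apply: (pos_case (fun j => - l j) (- L)); first by rewrite oppr_gt0.
  by move=> x; under eq_bigr do rewrite mulNr; rewrite sumrN comb mulNr.
move=> lpos comb.
have [x1 signs1] := venn_weighted_signs l' V.
have [x2 signs2] := venn_weighted_signs (fun j => - l' j) V.
have neg1 : \sum_(j in K) l' j * pw j x1 < 0.
  rewrite (bigD1 j0) //=; have [_ /(_ lpos) t0] := signs1 j0 j0K.
  have : \sum_(j in K | j != j0) l' j * pw j x1 <= 0.
    by apply: sumr_le0 => j /andP[jK _]; case: (signs1 j jK).
  lra.
have pos2 : 0 <= \sum_(j in K) l' j * pw j x2.
  by apply: sumr_ge0 => j jK; have [] := signs2 j jK; rewrite mulNr oppr_le0.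
rewrite !comb in neg1 pos2; have := Qpos x1; have := Qpos x2; nra.
Qed.

Lemma venn_centers_row_free K s0 : venn_balls c r K -> s0 \in K ->
  row_free (rowsmx (K :\ s0) (fun j => c j - c s0)).
Proof.
move=> V s0K; apply/negPn/negP => /rowsmx_dependence[l [[j1 j1K l1] comb]].
have j1s0 : j1 != s0 by move: j1K; rewrite in_setD1 => /andP[].
pose m j := if j == s0 then - \sum_(i in K :\ s0) l i else l j.
apply: (venn_combination_not_proportional (l := m) (Q := fun=> 1)
  (L := \sum_(j in K :\ s0) l j * (pw j 0 - pw s0 0)) V).
- by exists j1; [exact: (subsetP (subD1set K s0)) | rewrite /m (negbTE j1s0)].
- by move=> _; exact: ltr01.
move=> x; rewrite mulr1 (bigD1 s0) //= /m eqxx.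
have -> : \sum_(j in K | j != s0) (if j == s0 then - \sum_(i in K :\ s0) l i else l j) * pw j x
          = \sum_(j in K :\ s0) l j * pw j x.
  by apply: eq_big => [j | j /andP[_ /negbTE ->]] //; rewrite in_setD1 andbC.
have -> : \sum_(j in K :\ s0) l j * pw j x = \sum_(j in K :\ s0) l j * pw s0 x
    + (- 2 * \sum_(j in K :\ s0) l j * dot (c j - c s0) x
       + \sum_(j in K :\ s0) l j * (pw j 0 - pw s0 0)).
  rewrite mulr_sumr -!big_split /=; apply: eq_bigr => j _.
  by rewrite -[pw j x](subrK (pw s0 x)) (power_sub _ _ _ _ x); ring.
by rewrite -(dot_sumZl _ l (fun j => c j - c s0)) comb dotC dot0r -mulr_suml; ring.
Qed.

Lemma radical_center K s0 : s0 \in K ->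
  row_free (rowsmx (K :\ s0) (fun j => c j - c s0)) ->
  exists x, forall j, j \in K -> pw j x = pw s0 x.
Proof.
move=> s0K free; have [x xE] := rowsmx_solve (fun j => (pw j 0 - pw s0 0) / 2) free.
exists x => j jK; have [-> // | js0] := eqVneq j s0.
apply/eqP; rewrite -subr_eq0 power_sub xE; last by rewrite in_setD1 js0.
by apply/eqP; field.
Qed.

(* If the common power P were positive, the powers shifted to x0 would give a
   combination proportional to |x - x0|^2 + P, using a linear dependence of the
   more than k vectors x0 - c j. *)
Lemma venn_common_power_neg K x0 P : venn_balls c r K -> (k < #|K|)%nat ->
  (forall j, j \in K -> pw j x0 = P) ->
  ~ (exists x, forall j, j \in K -> pw j x = 0) -> P < 0.
Proof.
move=> V kK x0P noint; have [Ppos | // | P0] := ltrgt0P P; last first.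
  by case: noint; exists x0 => j jK; rewrite x0P.
exfalso; have [l [j1K comb]] := card_gt_dependence (fun j => x0 - c j) kK.
apply: (venn_combination_not_proportional (Q := fun x => dot (x - x0) (x - x0) + P)
  (L := \sum_(j in K) l j) V j1K).
  by move=> x /=; have := dot_ge0 (x - x0); lra.
move=> x; transitivity (\sum_(j in K) l j * pw j (x0 + (x - x0))).
  by apply: eq_bigr => j _; rewrite addrC subrK.
transitivity (\sum_(j in K) (l j * (dot (x - x0) (x - x0) + P)
                              + 2 * (l j * dot (x0 - c j) (x - x0)))).
  by apply: eq_bigr => j jK; rewrite power_shift x0P //; ring.
rewrite big_split /= -mulr_sumr -(dot_sumZl _ l (fun j => x0 - c j)) comb.
by rewrite dotC dot0r mulr0 addr0 -mulr_suml.
Qed.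

Lemma venn_radical_center K s0 : venn_balls c r K -> s0 \in K -> (k < #|K|)%nat ->
  ~ (exists x, forall j, j \in K -> pw j x = 0) ->
  exists2 x, (forall j, j \in K -> pw j x = pw s0 x) & pw s0 x < 0.
Proof.
move=> V s0K kK noint; have [x x_radical] := radical_center s0K (venn_centers_row_free V s0K).
by exists x => //; apply: venn_common_power_neg V kK x_radical noint.
Qed.

(* X + R d is the radical line of the spheres of s. *)
Section RadicalLine.
Variables (s : {set 'I_n}) (s0 a0 : 'I_n) (X d : 'rV[R]_k).
Local Notation frame b := ((b |: s) :\ s0).
Local Notation y j := (c j - c s0).
Hypotheses (s_card : #|s| = k) (s0_s : s0 \in s) (a0_s : a0 \notin s)
  (a0_free : row_free (rowsmx (frame a0) (fun j => y j)))
  (X_radical : forall j, j \in s -> pw j X = pw s0 X)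
  (d_dual : forall j, j \in frame a0 -> dot (y j) d = (j == a0)%:R).

Lemma card_frame b : b \notin s -> #|frame b| = k.
Proof.
move=> bs; have := cardsD1 s0 (b |: s).
by rewrite cardsU1 bs s_card in_setU1 s0_s orbT add1n => -[].
Qed.

Lemma in_frame b j : j \in s -> j != s0 -> j \in frame b.
Proof. by move=> js js0; rewrite in_setD1 js0 in_setU1 js orbT. Qed.

Lemma a0_in_frame : a0 \in frame a0.
Proof. by rewrite in_setD1 setU11 andbT; apply: contraNneq a0_s => ->. Qed.

Lemma d_dual_s j : j \in s -> j != s0 -> dot (y j) d = 0.
Proof.
move=> js js0; rewrite d_dual ?in_frame //.
by case: eqVneq js => // ->; rewrite (negbTE a0_s).
Qed.

Lemma on_radical_line x : (forall j, j \in s -> pw j x = pw s0 x) ->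
  x = X + dot (y a0) (x - X) *: d.
Proof.
move=> x_radical; set mu := dot (y a0) (x - X).
apply/eqP; rewrite -subr_eq0 opprD addrA; apply/eqP.
apply: (rowsmx_eq0 a0_free (card_frame a0_s)) => j.
rewrite in_setD1 in_setU1 => /andP[js0 /orP[/eqP-> | js]].
  by rewrite dotBr dotZr d_dual ?a0_in_frame // eqxx mulr1 subrr.
rewrite dotBr dotZr d_dual_s // mulr0 subr0.
exact: radical_dot_eq0 (X_radical js) (x_radical j js).
Qed.

Lemma dual_crosses b : b \notin s -> row_free (rowsmx (frame b) (fun j => y j)) ->
  dot (y b) d != 0.
Proof.
move=> bs freeb; apply/negP => /eqP t0.
suff d0 : d = 0.
  by have := d_dual a0_in_frame; rewrite d0 dot0r eqxx => /eqP; rewrite eq_sym oner_eq0.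
apply: (rowsmx_eq0 freeb (card_frame bs)) => j.
by rewrite in_setD1 in_setU1 => /andP[js0 /orP[/eqP-> // | js]]; apply: d_dual_s.
Qed.

(* mu is the parameter of the radical center of b |: s on the line X + R d. *)
Lemma radical_line_crossing b xb :
  b \notin s -> row_free (rowsmx (frame b) (fun j => y j)) ->
  (forall j, j \in b |: s -> pw j xb = pw s0 xb) -> pw s0 xb < 0 ->
  exists mu t, [/\ t != 0, pw s0 (X + mu *: d) < 0 &
    forall u, pw b (X + u *: d) = pw s0 (X + u *: d) - 2 * t * (u - mu)].
Proof.
move=> bs freeb xb_radical xb_in.
have xbE := on_radical_line (fun j js => xb_radical j (setU1r b js)).
set mu := dot (y a0) (xb - X) in xbE.
exists mu, (dot (y b) d); split; [exact: dual_crosses | by rewrite -xbE |].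
move=> u; have := power_sub_radical (X + u *: d) (xb_radical b (setU11 b s)).
have -> : X + u *: d - xb = (u - mu) *: d by rewrite xbE scalerBl opprD addrACA subrr add0r.
by rewrite dotZr => /(canRL (subrK _)) ->; ring.
Qed.

End RadicalLine.

Lemma venn_balls_dim_gt0 K j : venn_balls c r K -> j \in K -> (0 < k)%nat.
Proof.
move=> V jK; rewrite lt0n; apply/eqP => k0.
have [x1 in1] := V set0 (sub0set K); have [x2 in2] := V K (subxx K).
have x12 : x1 = x2 by apply/rowP => i; have := ltn_ord i; rewrite [X in (_ < X)%nat]k0.
by have := in2 j jK; rewrite -x12 in1 // inE jK.
Qed.

Lemma venn_setU1_radical (s : {set 'I_n}) s0 b : #|s| = k -> s0 \in s -> b \notin s ->
  venn_balls c r (b |: s) -> ~ (exists x, forall j, j \in b |: s -> pw j x = 0) ->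
  row_free (rowsmx ((b |: s) :\ s0) (fun j => c j - c s0)) /\
  exists2 xb, (forall j, j \in b |: s -> pw j xb = pw s0 xb) & pw s0 xb < 0.
Proof.
move=> sk s0s bs V noint; have s0b : s0 \in b |: s by rewrite setU1r.
split; first exact: venn_centers_row_free V s0b.
by apply: venn_radical_center V s0b _ noint; rewrite cardsU1 bs sk.
Qed.

Lemma opposite_points (s Att : {set 'I_n}) : #|s| = k ->
  (forall b, b \in Att -> [/\ b \notin s, venn_balls c r (b |: s) &
      ~ exists x, forall j, j \in b |: s -> pw j x = 0]) ->
  exists p q, forall b, b \in Att -> (pw b p < 0) = ~~ (pw b q < 0).
Proof.
move=> sk good; have [-> | [a0 a0Att]] := set_0Vmem Att.
  by exists 0, 0 => b; rewrite inE.
have [a0s V0 noint0] := good a0 a0Att.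
have [s0 s0s] : exists s0, s0 \in s.
  by apply/card_gt0P; rewrite sk; apply: venn_balls_dim_gt0 V0 (setU11 a0 s).
have [free0 [X X_radical X_in]] := venn_setU1_radical sk s0s a0s V0 noint0.
have [d d_dual] := rowsmx_solve (fun j => (j == a0)%:R) free0.
have X_radical_s j : j \in s -> pw j X = pw s0 X by move=> js; apply: X_radical; rewrite setU1r.
have d0 : d != 0.
  by apply: contraNneq (dual_crosses sk s0s a0s d_dual a0s free0) => ->; rewrite dot0r.
have [lm [lp factor]] := quadratic_factor (dot (X - c s0) d) (dot_gt0 d0) X_in.
have along u : pw s0 (X + u *: d) = dot d d * (u - lm) * (u - lp).
  by rewrite -factor power_shift dotZl !dotZr; ring.
(* The two common points of the spheres of s, on the radical line of s. *)
exists (X + lm *: d), (X + lp *: d) => b bAtt.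
have [bs V noint] := good b bAtt.
have [freeb [xb xb_radical xb_in]] := venn_setU1_radical sk s0s bs V noint.
have [mu [t [t0 mu_in cross]]] :=
  radical_line_crossing sk s0s a0s free0 X_radical_s d_dual bs freeb xb_radical xb_in.
have mu_between : (mu - lm) * (mu - lp) < 0.
  by move: mu_in; rewrite along -mulrA pmulr_rlt0 ?dot_gt0.
have t2 : 0 < t ^+ 2 by rewrite exprn_even_gt0.
apply: lt0_mul_opposite; rewrite !cross !along !subrr !mulr0 !mul0r !sub0r; nra.
Qed.

End PowerFamily.

(** * Splitting the attaching set *)

Section Splitting.
Variable n : nat.
Implicit Types (C : code n) (i j : 'I_n).

Lemma clique_setU1 C (s : {set 'I_n}) (b : 'I_n) :
  clique C s -> attaching_set C s b -> clique C (b |: s).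
Proof.
move=> cs [bs bG] x y; rewrite !in_setU1 => /orP[/eqP-> | xs] /orP[/eqP-> | ys] xy.
- by rewrite eqxx in xy.
- exact: bG.
- exact/Gedge_sym/bG.
- exact: cs.
Qed.

Lemma attaching_nonadjacent C (s : {set 'I_n}) k (a a' : 'I_n) : max_clique_size C k.+1 ->
  clique C s -> #|s| = k -> attaching_set C s a -> attaching_set C s a' ->
  a != a' -> ~ Gedge C a a'.
Proof.
move=> [_ max_clique] cs sk [as_ aG] a'att aa' aa'G.
have a_notin : a \notin a' |: s by rewrite in_setU1 negb_or aa' as_.
have : clique C (a |: (a' |: s)).
  apply: clique_setU1 (clique_setU1 cs a'att) _; split=> // j.
  by rewrite in_setU1 => /orP[/eqP-> | /aG].
move/max_clique; rewrite cardsU1 a_notin cardsU1 (proj1 a'att) sk.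
by rewrite add1n ltnn.
Qed.

Lemma rf_relation_pair_shape C (a b : {set 'I_n}) (u v : 'I_n) : set0 \in C -> rf_relation C a b ->
  [disjoint a & b] -> a :|: b \subset [set u; v] -> u \in b -> a = [set v] /\ b = [set u].
Proof.
move=> C0 rf ab sub ub.
have [x xa] : exists x, x \in a.
  apply/set0Pn; apply: contraNneq (rf set0 C0) => ->.
  by rewrite sub0set -setI_eq0 setI0 eqxx.
have uv y : y \in a :|: b -> (y == u) || (y == v) by move/(subsetP sub); rewrite !inE.
have a_v y : y \in a -> y = v.
  move=> ya; have /orP[/eqP yu | /eqP //] := uv y (subsetP (subsetUl a b) y ya).
  by rewrite yu (disjointFl ab ub) in ya.
have b_u y : y \in b -> y = u.
  move=> yb; have /orP[/eqP // | /eqP yv] := uv y (subsetP (subsetUr a b) y yb).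
  by rewrite yv -(a_v x xa) (disjointFr ab xa) in yb.
split; apply/setP => y; rewrite inE; apply/idP/eqP => [| ->]; [exact: a_v | | exact: b_u | by []].
by rewrite -(a_v x xa).
Qed.

Lemma nonadjacent_comparable C (W : {set 'I_n}) (a a' : 'I_n) : set0 \in C -> W \in C ->
  a \in W -> a' \in W -> a != a' -> ~ Gedge C a a' -> Pcomparable C a a'.
Proof.
move=> C0 WC aW a'W aa' nonadj.
have [al [be [albe [sub CF]]]] : exists al be : {set 'I_n},
    [disjoint al & be] /\ al :|: be \subset [set a; a'] /\ in_CF C (pmono al be).
  by apply: contrapT => none; apply: nonadj.
have rf := in_CF_rf_relation CF.
have alW : al \subset W.
  by apply: subset_trans (subsetUl al be) (subset_trans sub _); rewrite subUset !sub1set aW.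
have : ~~ [disjoint be & W] by have := rf W WC; rewrite alW.
rewrite -setI_eq0 => /set0Pn[x]; rewrite inE => /andP[xbe _].
have := subsetP sub x; rewrite in_setU xbe orbT !inE => /(_ isT) /orP[] /eqP xa; subst x.
  have [al1 be1] := rf_relation_pair_shape C0 rf albe sub xbe.
  by right; rewrite al1 be1 in CF; split; rewrite // eq_sym.
rewrite [[set a; a']]setUC in sub; have [al1 be1] := rf_relation_pair_shape C0 rf albe sub xbe.
by left; rewrite al1 be1 in CF.
Qed.

Lemma Plt_codeword C (a b : 'I_n) (c : {set 'I_n}) : Plt C a b -> c \in C -> a \in c -> b \in c.
Proof.
move=> [_ /in_CF_rf_relation rf] cC ac; apply/negPn/negP => bc.
by have := rf c cC; rewrite sub1set ac disjoints1 bc.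
Qed.

Lemma two_codewords_split C (s Att Wp Wq : {set 'I_n}) :
  set0 \in C -> Wp \in C -> Wq \in C ->
  (forall i, attaching_set C s i <-> i \in Att) ->
  {in Att &, forall a a', a != a' -> ~ Gedge C a a'} ->
  {in Att, forall b, (b \in Wp) = (b \notin Wq)} ->
  exists A B : {set 'I_n},
    [/\ (forall i, attaching_set C s i <-> i \in A :|: B),
        [disjoint A & B],
        (forall a a', a \in A -> a' \in A -> a != a' -> Pcomparable C a a'),
        (forall b b', b \in B -> b' \in B -> b != b' -> Pcomparable C b b') &
        (forall a b, a \in A -> b \in B -> ~ Pcomparable C a b)].
Proof.
move=> C0 WpC WqC Att_eq nonadj sep.
exists (Att :&: Wp), (Att :&: Wq); split.
- move=> i; rewrite Att_eq !inE -andb_orr; split=> [iA | /andP[] //].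
  by rewrite iA (sep i iA) orNb.
- apply/disjointP => b; rewrite !inE => /andP[bA bp] /andP[_ bq].
  by rewrite (sep b bA) bq in bp.
- move=> a a'; rewrite !inE => /andP[aA ap] /andP[a'A a'p] aa'.
  exact: nonadjacent_comparable C0 WpC ap a'p aa' (nonadj a a' aA a'A aa').
- move=> b b'; rewrite !inE => /andP[bA bq] /andP[b'A b'q] bb'.
  exact: nonadjacent_comparable C0 WqC bq b'q bb' (nonadj b b' bA b'A bb').
move=> a b; rewrite !inE => /andP[aA ap] /andP[bA bq] [ab | ba].
  by have := Plt_codeword ab WpC ap; rewrite (sep b bA) bq.
by have := Plt_codeword ba WqC bq; rewrite -[a \in Wq]negbK -(sep a aA) ap.
Qed.

End Splitting.

Section BallRealization.
Variables (k n : nat) (c : 'I_n -> 'rV[R]_k) (r : 'I_n -> R) (C : code n).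
Hypothesis real : realizes (fun i => open_ball (c i) (r i)) C.

Lemma realized_codeword x : [set j | power (c j) (r j) x < 0] \in C.
Proof.
apply/(real _).2; exists x; split=> j; rewrite inE open_ball_power //.
by move/negP.
Qed.

Lemma realized_shatters_venn K : shatters C K -> venn_balls c r K.
Proof.
move=> sh S SK; have [w wC wK] := sh S SK; have [x [x_in x_out]] := (real w).1 wC.
exists x => j jK; rewrite -wK inE jK andbT.
have [jw | jw] := boolP (j \in w); first by have := x_in j jw; rewrite open_ball_power.
by apply/negbTE/negP => xj; apply: (x_out j jw); rewrite open_ball_power.
Qed.

End BallRealization.

Theorem lemma3p6 (n k : nat) (C : code n) :
  code_conventions C ->
  ind_pierced C ->
  max_clique_size C k.+1 ->
  has_wf_ball_realization k C ->
  splittable k C.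
Proof.
move=> [C0 fire _] [k' pierced] max_clique [c [r [_ [[_ no_common] real]]]] s cs sk.
pose Att := [set b | `[< attaching_set C s b >]].
have AttP b : attaching_set C s b <-> b \in Att by rewrite inE; split=> /asboolP.
have good b : b \in Att -> [/\ b \notin s, venn_balls c r (b |: s) &
    ~ exists x, forall j, j \in b |: s -> power (c j) (r j) x = 0].
  move=> /AttP att; have [bs _] := att; split=> //.
    apply: (realized_shatters_venn real).
    exact: k_ind_pierced_shatters_clique pierced (clique_setU1 cs att) (fun j _ => fire j).
  move=> [x on_spheres]; apply: (no_common (b |: s) _ x) => [|j jbs].
    by rewrite cardsU1 bs sk.
  exact/sphere_power/on_spheres.
have [p [q pq]] := opposite_points sk good.
apply: (two_codewords_split C0 (realized_codeword real p) (realized_codeword real q) AttP).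
  by move=> a a' /AttP aAtt /AttP a'Att; apply: attaching_nonadjacent max_clique cs sk aAtt a'Att.
by move=> b bAtt; rewrite !inE pq.
Qed.
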